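(* Let $n\geq 1$. The restriction map $H^\bullet(\Gamma_{n+1};\mathbb{Q})\to H^\bullet(\Gamma_n;\mathbb{Q})$ induced by the natural inclusion $\Gamma_n\hookrightarrow\Gamma_{n+1}$ sends $\alpha_{\mathcal D}$, for $\mathcal D\in\mathcal D_{n+1}$, to $\alpha_{\mathcal D'}$ if $\mathcal D$ has an isolated vertex and $\mathcal D'\in\mathcal D_n$ is obtained by deleting one isolated vertex, and to $0$ if $\mathcal D$ has no isolated vertex. Consequently, for every $r\ge 0$, the map $H^r(\Gamma_{n+1};\mathbb{Q})\to H^r(\Gamma_n;\mathbb{Q})$ is an isomorphism whenever $n\geq 2r$.
   Context: $\Gamma_n=\mathrm{Br}_n/[P_n,P_n]$ where $P_n\subset\mathrm{Br}_n$ is the pure braid group; $\mathbb{Z}\mathcal A_n=P_n/[P_n,P_n]$; $H^\bullet(\Gamma_n;\mathbb{Q})$ is identified via restriction with $H^\bullet(\mathbb{Z}\mathcal A_n;\mathbb{Q})^{S_n}$, where $H^\bullet(\mathbb{Z}\mathcal A_n;\mathbb{Q})$ is the exterior algebra on $\omega_{ij}$ ($1\le i<j\le n$), with $\sigma(\omega_{ij})=\omega_{\sigma(i)\sigma(j)}$ if $\sigma(i)<\sigma(j)$, $\omega_{\sigma(j)\sigma(i)}$ otherwise. The inclusion $\Gamma_n\hookrightarrow\Gamma_{n+1}$ comes from adding a strand; on these exterior algebras restriction sends $\omega_{ij}$ with $j\le n$ to $\omega_{ij}$ and $\omega_{i,n+1}$ to $0$. For a simple graph $\Delta$ on $\{1,\dots,n\}$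 with lexicographically ordered edges $(i_1,j_1),\dots,(i_k,j_k)$, $\mu_\Delta=\omega_{i_1j_1}\cdots\omega_{i_kj_k}$. A graph is invariant if every automorphism induces an even permutation of its edges; $\mathcal D_n$ is the set of isomorphism classes of invariant graphs with exactly $n$ vertices. Representatives are chosen coherently: for each class $\mathcal G_0$ without isolated vertices a representative on $\{1,\dots,|V\mathcal G_0|\}$ is fixed, and the representative $\Delta_{\mathcal D}$ of a class $\mathcal D$ with $n$ vertices whose non-isolated part is $\mathcal G_0$ is that graph with the vertices $|V\mathcal G_0|+1,\dots,n$ added as isolated vertices. Then $\alpha_{\mathcal D}=\frac{1}{|\mathrm{Stab}_{S_n}(\Delta_{\mathcal D})|}\sum_{\sigma\in S_n}\sigma(\mu_{\Delta_{\mathcal D}})$, and the $\alpha_{\mathcal D}$, $\mathcal D\in\mathcal D_n$, form a basis of $H^\bullet(\Gamma_n;\mathbb{Q})$. *)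

From HB Require Import structures.
From mathcomp Require Import all_boot all_order all_algebra all_fingroup.
Set Implicit Arguments. Unset Strict Implicit. Unset Printing Implicit Defensive.
Import Order.TTheory GRing.Theory Num.Theory.
Local Open Scope ring_scope.

(* Vertices {1,...,n} are represented by 'I_n (vertex i+1 <-> ordinal i).
   Generators omega_ij (i<j) of H^1(ZA_n;Q) <-> edges (i,j), i<j. *)
Definition edge (n : nat) := {p : 'I_n * 'I_n | (p.1 < p.2)%N}.


Definition edge_le n (e f : edge n) : bool :=
  ((val e).1 < (val f).1)%N ||
  (((val e).1 == (val f).1) && ((val e).2 <= (val f).2)%N).
Definition edge_lt n (e f : edge n) : bool := (e != f) && edge_le e f.

Definition lexsort n (D : {set edge n}) : seq (edge n) := sort (@edge_le n) (enum D).

Fixpoint inv_count n (s : seq (edge n)) : nat :=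
  if s is x :: s' then (count (fun y => edge_lt y x) s' + inv_count s')%N else 0%N.

(* The exterior algebra Lambda[omega_ij] over Q, as a Q-vector space with
   basis the monomials mu_D indexed by edge sets D (simple graphs on [n]):
   an element is its coordinate function. *)
Definition ext n := {ffun {set edge n} -> rat}.
Definition sc n (c : rat) (x : ext n) : ext n := [ffun D => c * x D].

(* mu_D = omega_{i1 j1} ... omega_{ik jk} (edges in lex order) *)
Definition mu n (D : {set edge n}) : ext n := [ffun D' => (D' == D)%:R].

(* product omega_{e1} ... omega_{em} of a word of generators in the
   exterior algebra: 0 if a generator repeats, otherwise the sign of the
   reordering permutation times the monomial of the underlying edge set *)
Definition wordprod n (s : seq (edge n)) : ext n :=
  if uniq s then sc ((-1) ^+ inv_count s) (mu [set x in s]) else 0.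

(* sigma(omega_ij) = omega_{sigma i, sigma j} or omega_{sigma j, sigma i};
   insubd never uses its default since sigma is injective. *)
Definition edge_act n (s : 'S_n) (e : edge n) : edge n :=
  let i := (val e).1 in let j := (val e).2 in
  insubd e (if (s i < s j)%N then (s i, s j) else (s j, s i)).

Definition act n (s : 'S_n) (x : ext n) : ext n :=
  \sum_(D : {set edge n}) sc (x D) (wordprod (map (edge_act s) (lexsort D))).

Definition stab n (D : {set edge n}) : {set 'S_n} :=
  [set s : 'S_n | edge_act s @: D == D].

Definition graph_invariant n (D : {set edge n}) : Prop :=
  forall s : 'S_n, s \in stab D -> ~~ odd (inv_count (map (edge_act s) (lexsort D))).

Definition isolated n (D : {set edge n}) (v : 'I_n) : bool :=
  [forall e in D, ((val e).1 != v) && ((val e).2 != v)].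

(* coherent representative: the isolated vertices are exactly the last ones,
   i.e. D is (a graph without isolated vertices on {1..k}) plus isolated
   vertices k+1..n *)
Definition coherent n (D : {set edge n}) : bool :=
  [forall v : 'I_n, forall w : 'I_n, (v <= w)%N ==> isolated D v ==> isolated D w].

Definition alpha n (D : {set edge n}) : ext n :=
  sc (#|stab D|%:R)^-1 (\sum_(s : 'S_n) act s (mu D)).

Definition widen_edge n (e : edge n) : edge n.+1 :=
  Sub (widen_ord (leqnSn n) (val e).1, widen_ord (leqnSn n) (val e).2) (valP e).

Definition del_last n (D : {set edge n.+1}) : {set edge n} :=
  [set e | widen_edge e \in D].

(* restriction: omega_ij |-> omega_ij (j <= n), omega_{i,n+1} |-> 0 *)
Definition ext_restr n (x : ext n.+1) : ext n :=
  \sum_(D : {set edge n.+1})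
     sc (x D) (if [forall e in D, (val e).2 != ord_max] then mu (del_last D) else 0).

(* H^r(Gamma_n;Q) = degree-r S_n-invariants of the exterior algebra *)
Definition Hr n (r : nat) : pred (ext n) :=
  fun x => [forall D : {set edge n}, (#|D| != r) ==> (x D == 0)] &&
           [forall s : 'S_n, act s x == x].
Arguments Hr : clear implicits.

From Pilot Require Import Defs.
From mathcomp Require Import all_boot all_order all_algebra all_fingroup.
From mathcomp Require Import zify.
Set Implicit Arguments. Unset Strict Implicit. Unset Printing Implicit Defensive.
Import Order.TTheory GRing.Theory Num.Theory.
Local Open Scope ring_scope.

(* A permutation s sends the monomial mu_D to [graph_sign s D] times mu_(sD),
   the sign being the parity of the reordering of the edges of sD.  This sign
   is a cocycle because, for an injection g, the parity of
   inv(g l) + inv(l) does not depend on the order of the duplicate-free list l.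
   Hence the sum of the s(mu_D) is |Stab D| times the signed indicator of the
   orbit of D, while restriction reads off the coefficients of the graphs that
   avoid the last vertex.  Two such graphs in one orbit are related by a
   permutation fixing the last vertex (after composing with a transposition
   that fixes the graph edgewise), so restricting alpha_D gives alpha_D' or 0.
   If 2r <= n, every graph with r edges on n+1 vertices has an isolated
   vertex, so each orbit meets the graphs avoiding the last vertex: a degree r
   invariant is determined by its restriction, and any invariant y on n
   vertices extends to D |-> (sign) y(sD) for any s moving D off the last
   vertex. *)

Section EdgeAction.
Variable n : nat.
Implicit Types (e f : edge n) (s t : 'S_n) (a b : 'I_n) (D : {set edge n}).

Definition edge_pair a b : 'I_n * 'I_n := if (a < b)%N then (a, b) else (b, a).

Lemma edge_pairC a b : edge_pair a b = edge_pair b a.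
Proof.
by rewrite /edge_pair; case: (ltngtP a b) => // /val_inj ->.
Qed.

Lemma edge_ext e f : (val e).1 = (val f).1 -> (val e).2 = (val f).2 -> e = f.
Proof. by move: e f => [[a b] ?] [[c d] ?] /= h1 h2; apply: val_inj; rewrite /= h1 h2. Qed.

Lemma edge_ltn e : ((val e).1 < (val e).2)%N.
Proof. exact: (valP e). Qed.

Lemma edge_actE s e : val (edge_act s e) = edge_pair (s (val e).1) (s (val e).2).
Proof.
rewrite /edge_act insubdK //= /edge_pair; case: ltngtP => //= /val_inj /perm_inj e12.
by move: (edge_ltn e); rewrite e12 ltnn.
Qed.

Lemma edge_actM s t e : edge_act (s * t) e = edge_act t (edge_act s e).
Proof.
apply: val_inj; rewrite !edge_actE !permM [edge_pair (s _) _]/edge_pair.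
by case: ifP => _ //; apply: edge_pairC.
Qed.

Lemma edge_act_id s e :
  s (val e).1 = (val e).1 -> s (val e).2 = (val e).2 -> edge_act s e = e.
Proof.
move=> h1 h2; apply: val_inj; rewrite edge_actE h1 h2 /edge_pair edge_ltn.
by case: (val e).
Qed.

Lemma edge_act1 e : edge_act 1 e = e.
Proof. by apply: edge_act_id; rewrite perm1. Qed.

Lemma edge_actK s : cancel (edge_act s) (edge_act (s^-1)%g).
Proof. by move=> e; rewrite -edge_actM mulgV edge_act1. Qed.

Lemma edge_actKV s : cancel (edge_act (s^-1)%g) (edge_act s).
Proof. by move=> e; rewrite -edge_actM mulVg edge_act1. Qed.

Lemma edge_act_inj s : injective (edge_act s).
Proof. exact: can_inj (edge_actK s). Qed.

Lemma imset_edge_act1 D : edge_act 1 @: D = D.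
Proof. by rewrite (eq_imset _ edge_act1) imset_id. Qed.

Lemma imset_edge_actM s t D :
  edge_act (s * t) @: D = edge_act t @: (edge_act s @: D).
Proof. by rewrite -imset_comp; apply: eq_imset => e; rewrite edge_actM. Qed.

Lemma imset_edge_actKV s D : edge_act s @: (edge_act (s^-1)%g @: D) = D.
Proof. by rewrite -imset_comp (eq_imset _ (edge_actKV s)) imset_id. Qed.

Lemma card_imset_edge_act s D : #|edge_act s @: D| = #|D|.
Proof. exact/card_imset/edge_act_inj. Qed.

Definition incident e a := ((val e).1 == a) || ((val e).2 == a).

Lemma isolatedE D a : isolated D a = [forall e in D, ~~ incident e a].
Proof. by apply: eq_forallb => e; rewrite negb_or. Qed.

Lemma incident_act s e a : incident (edge_act s e) a = incident e ((s^-1)%g a).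
Proof.
have sE i : (s i == a) = (i == (s^-1)%g a) by rewrite -{1}(permKV s a) (inj_eq perm_inj).
by rewrite /incident edge_actE /edge_pair; case: ifP => _ /=; rewrite !sE // orbC.
Qed.

Lemma isolated_imset s D a : isolated (edge_act s @: D) a = isolated D ((s^-1)%g a).
Proof.
rewrite !isolatedE; apply/forall_inP/forall_inP => h e.
  by move=> eD; rewrite -incident_act; apply/h/imset_f.
by case/imsetP=> f fD ->; rewrite incident_act; apply: h.
Qed.

Lemma tperm_isolated_id D a b : isolated D a -> isolated D b ->
  {in D, forall e, edge_act (tperm a b) e = e}.
Proof.
move=> /forall_inP ha /forall_inP hb e eD.
case/andP: (ha e eD) (hb e eD) => a1 a2 /andP [b1 b2].
by apply: edge_act_id; rewrite tpermD // eq_sym.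
Qed.

Lemma exists_isolated D : (2 * #|D| < n)%N -> exists a, isolated D a.
Proof.
move=> hD; pose V := [set (val e).1 | e in D] :|: [set (val e).2 | e in D].
have cardV : (#|V| <= 2 * #|D|)%N.
  rewrite mul2n -addnn; apply: (leq_trans (leq_card_setU _ _)).
  by apply: leq_add; apply: leq_imset_card.
have /card_gt0P [a] : (0 < #|~: V|)%N by have := cardsC V; rewrite card_ord; lia.
rewrite !inE negb_or => /andP [a1 a2]; exists a; apply/forall_inP => e eD.
by apply/andP; split; [apply: contraNneq a1 | apply: contraNneq a2] => <-; apply: imset_f.
Qed.

End EdgeAction.

Section LexOrder.
Variable n : nat.
Implicit Types (e f : edge n) (D : {set edge n}) (l : seq (edge n)).

Lemma edge_le_total : total (@edge_le n).
Proof.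
move=> e f; rewrite /edge_le; case: (ltngtP (val e).1 (val f).1) => // [_|/val_inj ->].
  by rewrite orbT.
by rewrite eqxx leq_total.
Qed.

Lemma edge_le_trans : transitive (@edge_le n).
Proof.
move=> f e g; rewrite /edge_le.
case/orP=> [h1|/andP [/eqP h1 h2]] /orP [h3|/andP [/eqP h3 h4]].
- by rewrite (ltn_trans h1 h3).
- by rewrite -h3 h1.
- by rewrite h1 h3.
- by rewrite h1 h3 eqxx (leq_trans h2 h4) orbT.
Qed.

Lemma edge_le_anti : antisymmetric (@edge_le n).
Proof.
move=> e f; rewrite /edge_le; case/andP.
case/orP=> [h1|/andP [/eqP h1 h2]] /orP [h3|/andP [/eqP h3 h4]].
- by move: (ltn_trans h1 h3); rewrite ltnn.
- by move: h1; rewrite h3 ltnn.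
- by move: h3; rewrite h1 ltnn.
- by apply: edge_ext => //; apply/val_inj/eqP; rewrite eqn_leq h2 h4.
Qed.

Lemma edge_lt_either e f : e != f -> (edge_lt e f + edge_lt f e = 1)%N.
Proof.
move=> ef; rewrite /edge_lt ef eq_sym ef /=.
have := edge_le_total e f; have := @edge_le_anti e f.
by case: (edge_le e f); case: (edge_le f e) => // /(_ isT) eq_ef; rewrite eq_ef eqxx in ef.
Qed.

Lemma lexsort_sorted D : sorted (@edge_le n) (lexsort D).
Proof. exact: (sort_sorted edge_le_total). Qed.

Lemma mem_lexsort D : lexsort D =i D.
Proof. by move=> e; rewrite mem_sort mem_enum. Qed.

Lemma lexsort_uniq D : uniq (lexsort D).
Proof. by rewrite sort_uniq enum_uniq. Qed.

Lemma lexsort_eq D l : sorted (@edge_le n) l -> uniq l -> l =i D -> lexsort D = l.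
Proof.
move=> l_sorted l_uniq lD.
apply: (sorted_eq edge_le_trans edge_le_anti (lexsort_sorted D) l_sorted).
by apply: uniq_perm (lexsort_uniq D) l_uniq _ => e; rewrite mem_lexsort lD.
Qed.

Lemma inv_count_sorted l : sorted (@edge_le n) l -> uniq l -> inv_count l = 0%N.
Proof.
elim: l => [|x l IHl] //= l_sorted /andP [xl l_uniq].
rewrite IHl ?(path_sorted l_sorted) // addn0; apply/eqP; rewrite -leqn0 leqNgt -has_count.
apply/hasPn => y yl; move/allP/(_ y yl): (order_path_min edge_le_trans l_sorted) => le_xy.
apply/andP => -[ne_yx le_yx].
by rewrite (@edge_le_anti y x) ?le_yx ?eqxx in ne_yx.
Qed.

Lemma inv_count_lexsort D : inv_count (lexsort D) = 0%N.
Proof. exact: inv_count_sorted (lexsort_sorted D) (lexsort_uniq D). Qed.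

Lemma set_map_lexsort (g : edge n -> edge n) D : [set e in map g (lexsort D)] = g @: D.
Proof.
apply/setP => e; rewrite inE; apply/mapP/imsetP => -[f fD ->]; exists f => //.
  by rewrite -mem_lexsort.
by rewrite mem_lexsort.
Qed.

End LexOrder.

Section InversionParity.
Variables (n : nat) (g : edge n -> edge n).
Hypothesis g_inj : injective g.
Implicit Types (x a : edge n) (l : seq (edge n)).

Definition twisted_inv l := (inv_count (map g l) + inv_count l)%N.

Definition cross_count x l :=
  (count (fun y => edge_lt (g y) (g x)) l + count (fun y => edge_lt y x) l)%N.

Lemma twisted_inv_cons x l : twisted_inv (x :: l) = (cross_count x l + twisted_inv l)%N.
Proof. by rewrite /twisted_inv /cross_count /= count_map addnACA. Qed.

Lemma cross_count_perm x l l' : perm_eq l l' -> cross_count x l = cross_count x l'.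
Proof. by move/seq.permP=> pll'; rewrite /cross_count !pll'. Qed.

Lemma cross_count_cons x a l : cross_count x (a :: l) =
  (edge_lt (g a) (g x) + edge_lt a x + cross_count x l)%N.
Proof. by rewrite /cross_count /= addnACA. Qed.

(* Moving [x] past [a] changes each of the two inversion counts by one. *)
Lemma odd_twisted_inv_move x A B : x \notin A ->
  odd (twisted_inv (A ++ x :: B)) = odd (twisted_inv (x :: A ++ B)).
Proof.
elim: A => [|a A IHA] //; rewrite inE negb_or => /andP [xa xA].
have perm_xAB : perm_eq (A ++ x :: B) (x :: A ++ B) by rewrite -cat1s perm_catCA.
rewrite !cat_cons [twisted_inv (a :: _)]twisted_inv_cons oddD IHA // -oddD.
rewrite !twisted_inv_cons (cross_count_perm _ perm_xAB) !cross_count_cons.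
have := edge_lt_either xa; have := edge_lt_either (_ : g x != g a).
by rewrite (inj_eq g_inj) xa => /(_ isT); lia.
Qed.

Lemma odd_twisted_inv_perm M L :
  uniq L -> perm_eq M L -> odd (twisted_inv M) = odd (twisted_inv L).
Proof.
elim: M L => [|x M IHM] L L_uniq ML; first by move: ML; rewrite perm_sym => /perm_nilP ->.
have xL : x \in L by rewrite -(perm_mem ML) mem_head.
case/splitPr: xL L_uniq ML => A B L_uniq ML.
have perm_xAB : perm_eq (A ++ x :: B) (x :: A ++ B) by rewrite -cat1s perm_catCA.
have xA : x \notin A by move: L_uniq; rewrite cat_uniq /= => /and3P [_ /norP []].
have AB_uniq : uniq (A ++ B) by move: L_uniq; rewrite (perm_uniq perm_xAB) => /andP [].
have MAB : perm_eq M (A ++ B) by rewrite -(perm_cons x) (permPl ML) perm_xAB.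
rewrite odd_twisted_inv_move // !twisted_inv_cons (cross_count_perm _ MAB).
by rewrite !(oddD (cross_count _ _)) (IHM _ AB_uniq MAB).
Qed.

End InversionParity.

Section GraphSign.
Variable n : nat.
Implicit Types (s t : 'S_n) (x : ext n) (D F : {set edge n}).

Definition reorder_count s D := inv_count (map (edge_act s) (lexsort D)).

Definition graph_sign s D : rat := (-1) ^+ reorder_count s D.

Lemma map_edge_act_lexsort_uniq s D : uniq (map (edge_act s) (lexsort D)).
Proof. by rewrite map_inj_uniq ?lexsort_uniq //; apply: edge_act_inj. Qed.

Lemma graph_signM s t D :
  graph_sign (s * t) D = graph_sign s D * graph_sign t (edge_act s @: D).
Proof.
have perm_sD : perm_eq (map (edge_act s) (lexsort D)) (lexsort (edge_act s @: D)).
  apply: uniq_perm (map_edge_act_lexsort_uniq s D) (lexsort_uniq _) _ => e.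
  by rewrite mem_lexsort -set_map_lexsort inE.
have := odd_twisted_inv_perm (@edge_act_inj n t) (lexsort_uniq _) perm_sD.
rewrite /twisted_inv inv_count_lexsort addn0 -map_comp.
rewrite (eq_map (_ : _ =1 edge_act (s * t))) => [odd_st|e]; last by rewrite /= edge_actM.
rewrite /graph_sign -[LHS](signrMK (reorder_count s D)) -exprD addnC; congr (_ * _).
by rewrite -signr_odd odd_st signr_odd.
Qed.

Lemma graph_sign_id s D : {in D, forall e, edge_act s e = e} -> graph_sign s D = 1.
Proof.
move=> sD; rewrite /graph_sign /reorder_count.
have -> : map (edge_act s) (lexsort D) = lexsort D.
  by rewrite -[RHS]map_id; apply/eq_in_map => e; rewrite mem_lexsort => /sD.
by rewrite inv_count_lexsort.
Qed.

Lemma graph_sign1 D : graph_sign 1 D = 1.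
Proof. by apply: graph_sign_id => e _; rewrite edge_act1. Qed.

Lemma graph_sign_stab s D : graph_invariant D -> s \in stab D -> graph_sign s D = 1.
Proof. by move=> D_inv /D_inv even_s; rewrite /graph_sign -signr_odd (negbTE even_s). Qed.

Lemma act_imset s x D : Defs.act s x (edge_act s @: D) = graph_sign s D * x D.
Proof.
rewrite /Defs.act sum_ffunE (bigD1 D) //= big1 => [|D' D'D].
  rewrite ffunE /wordprod map_edge_act_lexsort_uniq !ffunE set_map_lexsort eqxx.
  by rewrite addr0 mulr1 mulrC.
rewrite ffunE /wordprod map_edge_act_lexsort_uniq !ffunE set_map_lexsort.
by rewrite (inj_eq (imset_inj (@edge_act_inj n s))) eq_sym (negbTE D'D) !mulr0.
Qed.

Lemma act_mu s D F :
  Defs.act s (mu D) F = if edge_act s @: D == F then graph_sign s D else 0.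
Proof.
have [<-|sDF] := eqVneq (edge_act s @: D) F; first by rewrite act_imset ffunE eqxx mulr1.
rewrite -(imset_edge_actKV s F) act_imset ffunE; case: eqP => [sF|]; last by rewrite mulr0.
by rewrite -sF imset_edge_actKV eqxx in sDF.
Qed.

Lemma sum_act_mu D s0 : graph_invariant D ->
  (\sum_(s : 'S_n) Defs.act s (mu D)) (edge_act s0 @: D) = #|stab D|%:R * graph_sign s0 D.
Proof.
move=> D_inv; rewrite sum_ffunE (reindex_inj (mulIg s0)) /=.
rewrite (eq_bigr (fun s => if s \in stab D then graph_sign s0 D else 0)) => [|s _].
  by rewrite -big_mkcond sumr_const mulr_natl.
rewrite act_mu imset_edge_actM (inj_eq (imset_inj (@edge_act_inj n s0))) inE.
have [sD|//] := eqVneq (edge_act s @: D) D.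
by rewrite graph_signM sD graph_sign_stab ?mul1r // inE sD.
Qed.

Lemma stab_card_neq0 D : #|stab D|%:R != 0 :> rat.
Proof.
rewrite pnatr_eq0 -lt0n; apply/card_gt0P; exists 1%g.
by rewrite inE imset_edge_act1.
Qed.

Lemma alpha_orbit D s : graph_invariant D -> alpha D (edge_act s @: D) = graph_sign s D.
Proof. by move=> D_inv; rewrite ffunE sum_act_mu // mulKf ?stab_card_neq0. Qed.

Lemma alpha_off_orbit D F : (forall s, edge_act s @: D != F) -> alpha D F = 0.
Proof.
move=> DF; rewrite !ffunE sum_ffunE big1 ?mulr0 // => s _.
by rewrite act_mu (negbTE (DF s)).
Qed.

End GraphSign.

Lemma HrP m r (x : ext m) : reflect
  ((forall D : {set edge m}, #|D| != r -> x D = 0) /\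
   (forall (s : 'S_m) (D : {set edge m}), x (edge_act s @: D) = graph_sign s D * x D))
  (x \in Hr m r).
Proof.
rewrite unfold_in; apply: (iffP andP) => [[/forallP x_deg /forallP x_inv]|[x_deg x_inv]].
  split=> [D|s D]; first by move/implyP: (x_deg D) => x_D /x_D/eqP.
  by rewrite -act_imset (eqP (x_inv s)).
split; first by apply/forallP => D; apply/implyP => /x_deg ->.
apply/forallP => s; apply/eqP/ffunP => F.
by rewrite -[in LHS](imset_edge_actKV s F) act_imset -x_inv imset_edge_actKV.
Qed.

Section WidenGraph.
Variable n : nat.
Implicit Types (e f : edge n) (t : 'S_n) (E F : {set edge n}) (D : {set edge n.+1}).

Definition widen_graph E : {set edge n.+1} := @widen_edge n @: E.

Definition lift_last t : 'S_n.+1 := lift_perm ord_max ord_max t.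

Lemma widen_edgeE e :
  val (widen_edge e) = (widen_ord (leqnSn n) (val e).1, widen_ord (leqnSn n) (val e).2).
Proof. by []. Qed.

Lemma widen_edge_inj : injective (@widen_edge n).
Proof. by move=> e f /(congr1 val) [/val_inj e1 /val_inj e2]; apply: edge_ext. Qed.

Lemma isolated_last D : isolated D ord_max = [forall e in D, (val e).2 != ord_max].
Proof.
apply: eq_forallb => e; rewrite andb_idl // => _; rewrite -(inj_eq val_inj) /= neq_ltn.
by rewrite (leq_trans (edge_ltn e)) // -ltnS.
Qed.

Lemma isolated_last_widen_graph E : isolated (widen_graph E) ord_max.
Proof.
rewrite isolated_last; apply/forall_inP => _ /imsetP [e _ ->].
by rewrite -(inj_eq val_inj) /= neq_ltn ltn_ord.
Qed.

Lemma del_last_widen_graph E : del_last (widen_graph E) = E.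
Proof. by apply/setP => e; rewrite inE mem_imset //; apply: widen_edge_inj. Qed.

Lemma widen_graph_del_last D : isolated D ord_max -> widen_graph (del_last D) = D.
Proof.
rewrite isolated_last => /forall_inP D_last; apply/setP => e.
apply/imsetP/idP => [[f] | eD]; first by rewrite inE => ? ->.
have e2 : ((val e).2 < n)%N.
  by move: (D_last e eD) (ltn_ord (val e).2); rewrite -(inj_eq val_inj) /=; lia.
have e1 : ((val e).1 < n)%N by apply: ltn_trans e2; apply: edge_ltn.
pose f : edge n := Sub (Ordinal e1, Ordinal e2) (edge_ltn e).
have ef : e = widen_edge f by apply: edge_ext; apply: val_inj.
by exists f; rewrite // inE -ef.
Qed.

Lemma widen_graph_inj : injective widen_graph.
Proof. exact: can_inj del_last_widen_graph. Qed.

Lemma card_widen_graph E : #|widen_graph E| = #|E|.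
Proof. exact/card_imset/widen_edge_inj. Qed.

Lemma ext_restrE (x : ext n.+1) E : ext_restr x E = x (widen_graph E).
Proof.
rewrite /ext_restr sum_ffunE (bigD1 (widen_graph E)) //= big1 => [|D DE].
  rewrite -isolated_last isolated_last_widen_graph !ffunE del_last_widen_graph eqxx.
  by rewrite mulr1 addr0.
rewrite -isolated_last ffunE; case: ifP => [D_last|_]; last by rewrite ffunE mulr0.
rewrite ffunE; case: eqP => [DE'|_]; last by rewrite mulr0.
by rewrite DE' widen_graph_del_last ?eqxx in DE.
Qed.

Lemma edge_act_lift_last t e :
  edge_act (lift_last t) (widen_edge e) = widen_edge (edge_act t e).
Proof.
have lift_widen k : widen_ord (leqnSn n) k = lift ord_max k by apply: ord_inj; rewrite lift_max.
apply: val_inj; rewrite edge_actE !widen_edgeE /= edge_actE !lift_widen /lift_last.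
by rewrite !lift_perm_lift /edge_pair !lift_max; case: ifP.
Qed.

Lemma imset_lift_last t E :
  edge_act (lift_last t) @: widen_graph E = widen_graph (edge_act t @: E).
Proof.
by rewrite /widen_graph -!imset_comp; apply: eq_imset => e /=; rewrite edge_act_lift_last.
Qed.

Lemma lexsort_widen_graph E : lexsort (widen_graph E) = map (@widen_edge n) (lexsort E).
Proof.
apply: lexsort_eq.
- by rewrite sorted_map; apply: lexsort_sorted.
- by rewrite map_inj_uniq ?lexsort_uniq //; apply: widen_edge_inj.
- by move=> e; apply/mapP/imsetP => -[f fE ->]; exists f; rewrite // ?mem_lexsort in fE *.
Qed.

Lemma inv_count_widen (l : seq (edge n)) : inv_count (map (@widen_edge n) l) = inv_count l.
Proof.
by elim: l => [|e l IHl] //=; rewrite IHl count_map.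
Qed.

Lemma reorder_count_lift_last t E :
  reorder_count (lift_last t) (widen_graph E) = reorder_count t E.
Proof.
rewrite /reorder_count lexsort_widen_graph -map_comp -inv_count_widen -map_comp.
by congr inv_count; apply: eq_map => e /=; rewrite edge_act_lift_last.
Qed.

Lemma graph_sign_lift_last t E :
  graph_sign (lift_last t) (widen_graph E) = graph_sign t E.
Proof. by rewrite /graph_sign reorder_count_lift_last. Qed.

Lemma lift_last_surj (s : 'S_n.+1) : s ord_max = ord_max -> exists t, s = lift_last t.
Proof.
move=> s_last; pose f k := odflt k (unlift ord_max (s (lift ord_max k))).
have sf k : s (lift ord_max k) = lift ord_max (f k).
  have : ord_max != s (lift ord_max k) by rewrite -{1}s_last (inj_eq perm_inj) neq_lift.
  by case/unlift_some => j sj; rewrite /f => ->.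
have f_inj : injective f.
  by move=> a b fab; apply/(lift_inj (h := ord_max))/(@perm_inj _ s); rewrite !sf fab.
exists (perm f_inj); apply/permP => i; have [<-|] := eqVneq ord_max i.
  by rewrite s_last /lift_last lift_perm_id.
by case/unlift_some => j -> _; rewrite /lift_last lift_perm_lift permE sf.
Qed.

(* [tperm u ord_max] fixes every edge of the graph, so [tperm u ord_max * s]
   agrees with [s] on it and fixes the last vertex. *)
Lemma widen_graph_orbit E (s : 'S_n.+1) :
  isolated (edge_act s @: widen_graph E) ord_max ->
  exists t, edge_act s @: widen_graph E = widen_graph (edge_act t @: E) /\
            graph_sign s (widen_graph E) = graph_sign t E.
Proof.
rewrite isolated_imset => iso_u; set u := (s^-1)%g ord_max in iso_u.
have p_id := tperm_isolated_id iso_u (isolated_last_widen_graph E).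
have [t ps] : exists t, (tperm u ord_max * s)%g = lift_last t.
  by apply: lift_last_surj; rewrite permM tpermR permKV.
exists t; rewrite -imset_lift_last -graph_sign_lift_last -ps.
by rewrite imset_edge_actM graph_signM (graph_sign_id p_id) mul1r (eq_in_imset p_id) imset_id.
Qed.

End WidenGraph.

Section Restriction.
Variable n : nat.
Implicit Types (E F : {set edge n}) (D : {set edge n.+1}).

Lemma graph_invariant_widen E : graph_invariant (widen_graph E) -> graph_invariant E.
Proof.
move=> WE_inv t; rewrite inE => /eqP tE.
have: lift_last t \in stab (widen_graph E) by rewrite inE imset_lift_last tE.
by move/WE_inv; rewrite -[inv_count _]/(reorder_count _ _) reorder_count_lift_last.
Qed.

Lemma ext_restr_alpha_widen E : graph_invariant (widen_graph E) ->
  ext_restr (alpha (widen_graph E)) = alpha E.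
Proof.
move=> WE_inv; have E_inv := graph_invariant_widen WE_inv.
apply/ffunP => F; rewrite ext_restrE.
have [t /eqP <-|E_F] := pickP (fun t : 'S_n => edge_act t @: E == F).
  by rewrite -imset_lift_last !alpha_orbit // graph_sign_lift_last.
rewrite !alpha_off_orbit // => [t|s]; first by rewrite E_F.
apply/eqP => sE; have := isolated_last_widen_graph F; rewrite -sE.
case/widen_graph_orbit => t []; rewrite sE => /widen_graph_inj FtE _.
by have := E_F t; rewrite -FtE eqxx.
Qed.

Lemma ext_restr_alpha_no_isolated D : ~ (exists v, isolated D v) -> ext_restr (alpha D) = 0.
Proof.
move=> no_iso; apply/ffunP => F; rewrite ext_restrE [RHS]ffunE alpha_off_orbit // => s.
apply/eqP => sD; apply: no_iso; exists ((s^-1)%g ord_max).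
by rewrite -isolated_imset sD isolated_last_widen_graph.
Qed.

Lemma ext_restr_Hr r (x : ext n.+1) : x \in Hr n.+1 r -> ext_restr x \in Hr n r.
Proof.
case/HrP=> x_deg x_inv; apply/HrP; split=> [E|t E]; rewrite !ext_restrE.
  by rewrite -card_widen_graph; apply: x_deg.
by rewrite -imset_lift_last x_inv graph_sign_lift_last.
Qed.

Lemma Hr_del_last_act r (y : ext n) D (s : 'S_n.+1) : y \in Hr n r ->
  isolated D ord_max -> isolated (edge_act s @: D) ord_max ->
  graph_sign s D * y (del_last (edge_act s @: D)) = y (del_last D).
Proof.
case/HrP=> _ y_inv /widen_graph_del_last <-.
case/widen_graph_orbit => t [-> ->].
by rewrite !del_last_widen_graph y_inv signrMK.
Qed.

Section Stable.
Variable r : nat.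
Hypothesis le_2r_n : (2 * r <= n)%N.

Lemma exists_isolated_deg D : #|D| = r -> exists v, isolated D v.
Proof. by move=> Dr; apply: exists_isolated; rewrite Dr ltnS. Qed.

Lemma Hr_coef_isolated (x : ext n.+1) D v : x \in Hr n.+1 r -> isolated D v ->
  x D = graph_sign (tperm v ord_max) D * ext_restr x (del_last (edge_act (tperm v ord_max) @: D)).
Proof.
case/HrP=> _ x_inv D_v; rewrite ext_restrE widen_graph_del_last ?x_inv ?signrMK //.
by rewrite isolated_imset tpermV tpermR.
Qed.

Lemma ext_restr_inj_Hr : {in Hr n.+1 r &, injective (@ext_restr n)}.
Proof.
move=> x y x_Hr y_Hr xy; apply/ffunP => D.
have [Dr|Dr] := eqVneq #|D| r; last by case/HrP: x_Hr => -> //; case/HrP: y_Hr => ->.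
have [v D_v] := exists_isolated_deg Dr.
by rewrite (Hr_coef_isolated x_Hr D_v) (Hr_coef_isolated y_Hr D_v) xy.
Qed.

Definition extend_invariant (y : ext n) : ext n.+1 :=
  [ffun D : {set edge n.+1} => if #|D| == r then
     (if [pick s | isolated (edge_act s @: D) ord_max] is Some s
      then graph_sign s D * y (del_last (edge_act s @: D)) else 0) else 0].

Lemma extend_invariantE (y : ext n) D s : y \in Hr n r -> #|D| = r ->
  isolated (edge_act s @: D) ord_max ->
  extend_invariant y D = graph_sign s D * y (del_last (edge_act s @: D)).
Proof.
move=> y_Hr Dr sD_last; rewrite ffunE Dr eqxx.
case: pickP => [s0 s0D_last|]; last by move/(_ s); rewrite sD_last.
have s0s : s = (s0 * (s0^-1 * s))%g by rewrite mulKVg.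
rewrite [in RHS]s0s graph_signM imset_edge_actM -mulrA (Hr_del_last_act y_Hr s0D_last) //.
by rewrite -imset_edge_actM -s0s.
Qed.

Lemma extend_invariant_Hr (y : ext n) : y \in Hr n r -> extend_invariant y \in Hr n.+1 r.
Proof.
move=> y_Hr; apply/HrP; split=> [D /negbTE Dr|s D]; first by rewrite ffunE Dr.
have [Dr|Dr] := eqVneq #|D| r; last by rewrite !ffunE card_imset_edge_act (negbTE Dr) mulr0.
have [v D_v] := exists_isolated_deg Dr; set p := tperm v ord_max.
have pD_last : isolated (edge_act p @: D) ord_max by rewrite isolated_imset tpermV tpermR.
have sspD : edge_act (s^-1 * p)%g @: (edge_act s @: D) = edge_act p @: D.
  by rewrite -imset_edge_actM mulKVg.
rewrite (extend_invariantE y_Hr Dr pD_last).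
rewrite (extend_invariantE (s := (s^-1 * p)%g) y_Hr) ?sspD ?card_imset_edge_act //.
have sign_p : graph_sign p D = graph_sign s D * graph_sign (s^-1 * p)%g (edge_act s @: D).
  by rewrite -graph_signM mulKVg.
by rewrite sign_p -mulrA signrMK.
Qed.

Lemma ext_restr_extend_invariant (y : ext n) : y \in Hr n r -> ext_restr (extend_invariant y) = y.
Proof.
move=> y_Hr; apply/ffunP => E; rewrite ext_restrE.
have [Er|Er] := eqVneq #|E| r; last first.
  by rewrite ffunE card_widen_graph (negbTE Er); case/HrP: y_Hr => ->.
rewrite (extend_invariantE (s := 1%g) y_Hr) ?imset_edge_act1 ?card_widen_graph //.
  by rewrite graph_sign1 mul1r del_last_widen_graph.
exact: isolated_last_widen_graph.
Qed.

End Stable.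
End Restriction.

Theorem proposition2p9 (n : nat) (hn : (1 <= n)%N) :
  (forall D : {set edge n.+1}, graph_invariant D -> coherent D ->
     ((exists v, isolated D v) -> ext_restr (alpha D) = alpha (del_last D)) /\
     (~ (exists v, isolated D v) -> ext_restr (alpha D) = 0)) /\
  (forall r : nat, (2 * r <= n)%N ->
     [/\ (forall x, x \in Hr n.+1 r -> ext_restr x \in Hr n r),
         {in Hr n.+1 r &, injective (@ext_restr n)} &
         (forall y, y \in Hr n r -> exists2 x, x \in Hr n.+1 r & ext_restr x = y)]).
Proof.
split=> [D D_inv D_coh | r le_2r_n].
  split=> [[v D_v] | ]; last exact: ext_restr_alpha_no_isolated.
  have D_last : isolated D ord_max.
    by move/forallP/(_ v)/forallP/(_ ord_max): D_coh; rewrite -ltnS ltn_ord D_v.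
  by rewrite -[in LHS](widen_graph_del_last D_last) ext_restr_alpha_widen ?widen_graph_del_last.
split; [exact: ext_restr_Hr | exact: ext_restr_inj_Hr | move=> y y_Hr].
by exists (extend_invariant r y); [apply: extend_invariant_Hr | apply: ext_restr_extend_invariant].
Qed.
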